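(* Let $\delta>0$ be the rounding precision and let the representable numbers be the integer multiples of $\delta$. For $x\in\mathbb{R}$ let $\lfloor x\rfloor$ denote the greatest representable number $\le x$, and let stochastic rounding be the random variable $$\mathrm{fl}(x)=\begin{cases}\lfloor x\rfloor & \text{with probability } 1-\frac{x-\lfloor x\rfloor}{\delta},\\ \lfloor x\rfloor+\delta & \text{with probability } \frac{x-\lfloor x\rfloor}{\delta},\end{cases}$$ with all rounding operations performed independently. Then for real numbers $x_1,\dots,x_{N_s}$ and $\mathrm{op}\in\{+,-\}$, $$\mathrm{fl}(\mathrm{fl}(\cdots \mathrm{fl}(\mathrm{fl}(x_1)\,\mathrm{op}\,x_2)\,\mathrm{op}\,\cdots)\,\mathrm{op}\,x_{N_s})=\mathrm{fl}(x_1)\,\mathrm{op}\,\mathrm{fl}(x_2)\,\mathrm{op}\,\cdots\,\mathrm{op}\,\mathrm{fl}(x_{N_s}),$$ where the equality is understood as equality of the probability distributions of the two random variables.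
   Context: Stochastic rounding (SR) with rounding precision $\delta$ as defined in the claim. *)

From HB Require Import structures.
From mathcomp Require Import all_boot all_order all_algebra.
From mathcomp Require Import reals.
Set Implicit Arguments. Unset Strict Implicit. Unset Printing Implicit Defensive.
Import Order.TTheory GRing.Theory Num.Theory.
Local Open Scope ring_scope.

(* A finitely supported (discrete) distribution over R, given as a finite
   list of (probability, value) atoms. *)
Definition fdist (R : realType) := seq (R * R).

Definition prob_of (R : realType) (d : fdist R) (A : pred R) : R :=
  \sum_(pv <- d | A pv.2) pv.1.

Definition same_law (R : realType) (d e : fdist R) : Prop :=
  forall A : pred R, prob_of d A = prob_of e A.

Definition fbind (R : realType) (d : fdist R) (f : R -> fdist R) : fdist R :=
  flatten [seq [seq (pv.1 * qw.1, qw.2) | qw <- f pv.2] | pv <- d].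

Definition fcombine (R : realType) (op : R -> R -> R) (d e : fdist R) : fdist R :=
  fbind d (fun v => [seq (qw.1, op v qw.2) | qw <- e]).

Definition rfloor (R : realType) (delta x : R) : R :=
  delta * (Num.floor (x / delta))%:~R.

Definition SR (R : realType) (delta x : R) : fdist R :=
  let f := rfloor delta x in
  [:: (1 - (x - f) / delta, f); ((x - f) / delta, f + delta)].

(* fl(...fl(fl(x1) op x2) op ... op xN), each rounding independent. *)
Definition lhs_law (R : realType) (delta : R) (op : R -> R -> R)
  (x1 : R) (xs : seq R) : fdist R :=
  foldl (fun d x => fbind d (fun v => SR delta (op v x))) (SR delta x1) xs.

(* fl(x1) op fl(x2) op ... op fl(xN) (left-associated), independent roundings. *)
Definition rhs_law (R : realType) (delta : R) (op : R -> R -> R)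
  (x1 : R) (xs : seq R) : fdist R :=
  foldl (fun d x => fcombine op d (SR delta x)) (SR delta x1) xs.

From HB Require Import structures.
From mathcomp Require Import all_boot all_order all_algebra.
From mathcomp Require Import reals.
From mathcomp Require Import ring lra.
Import Order.TTheory GRing.Theory Num.Theory.
Local Open Scope ring_scope.

(* Laws are compared through the expectations of all test functions.  If
   [x = delta * (m + t)] with [m] an integer and [0 <= t < 1], then [fl x]
   puts mass [1 - t] on [delta m] and [t] on [delta (m + 1)].  This description
   is invariant under translation by a representable number and, up to the
   relabelling [t -> 1 - t], under negation; hence for representable [v],
   [fl (v op x)] has the law of [v op fl x].  Since every intermediate result
   of the left-hand side is representable, the two sides agree by induction
   on the number of operands. *)

Section Expectation.
Variable R : realType.

Definition expect (d : fdist R) (g : R -> R) : R := \sum_(pv <- d) pv.1 * g pv.2.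

Lemma prob_of_expect (d : fdist R) (A : pred R) :
  prob_of d A = expect d (fun v => (A v)%:R).
Proof.
rewrite /prob_of /expect big_mkcond; apply: eq_bigr => pv _.
by case: (A pv.2); rewrite ?mulr1 ?mulr0.
Qed.

Lemma same_law_expect (d e : fdist R) :
  (forall g, expect d g = expect e g) -> same_law d e.
Proof. by move=> deq A; rewrite !prob_of_expect. Qed.

Lemma expect_fbind d f g : expect (fbind d f) g = expect d (fun v => expect (f v) g).
Proof.
rewrite /expect /fbind big_flatten /= big_map; apply: eq_bigr => pv _.
by rewrite big_map mulr_sumr; apply: eq_bigr => qw _ /=; rewrite mulrA.
Qed.

Lemma expect_fcombine op d e g :
  expect (fcombine op d e) g = expect d (fun v => expect e (fun w => g (op v w))).
Proof. by rewrite /fcombine expect_fbind; apply: eq_bigr => pv _; rewrite /expect big_map. Qed.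

End Expectation.

Arguments expect {R}.

Section StochasticRounding.
Variables (R : realType) (delta : R).
Hypothesis delta_gt0 : 0 < delta.

Definition representable (v : R) : Prop := exists k : int, v = delta * k%:~R.

Definition representable_support (d : fdist R) : Prop :=
  forall pv, pv \in d -> representable pv.2.

Lemma representable_support_SR x : representable_support (SR delta x).
Proof.
move=> pv; rewrite !inE => /orP [] /eqP -> /=; rewrite /rfloor.
  by exists (Num.floor (x / delta)).
by exists (Num.floor (x / delta) + 1); rewrite intrD mulrDr mulr1.
Qed.

Lemma representable_support_fbind d f :
  (forall v, representable_support (f v)) -> representable_support (fbind d f).
Proof.
move=> f_repr pv /flattenP [s /mapP [u _ ->] /mapP [qw qw_in ->]].
exact: f_repr qw_in.
Qed.

Lemma expect_SR_frac (m : int) t x g :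
  0 <= t < 1 -> x = delta * (m%:~R + t) ->
  expect (SR delta x) g = (1 - t) * g (delta * m%:~R) + t * g (delta * m%:~R + delta).
Proof.
move=> /andP [t_ge0 t_lt1] ->.
have delta_neq0 : delta != 0 by rewrite gt_eqF.
rewrite /expect /SR /rfloor !big_cons big_nil addr0 /=.
have -> : Num.floor (delta * (m%:~R + t) / delta) = m.
  rewrite mulrC mulrA mulVf // mul1r.
  by apply: floor_def; rewrite intrD; apply/andP; split; lra.
by have -> : (delta * (m%:~R + t) - delta * m%:~R) / delta = t by field.
Qed.

Lemma int_frac_decomposition x :
  exists m : int, exists2 t, 0 <= t < 1 & x = delta * (m%:~R + t).
Proof.
exists (Num.floor (x / delta)), (x / delta - (Num.floor (x / delta))%:~R).
  have := floorD1_gt (x / delta); rewrite intrD subr_ge0 floor_le /=; lra.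
by rewrite addrC subrK; field; rewrite gt_eqF.
Qed.

Lemma expect_SR_shift v x g : representable v ->
  expect (SR delta (v + x)) g = expect (SR delta x) (fun w => g (v + w)).
Proof.
move=> [k ->]; have [m [t t_in x_eq]] := int_frac_decomposition x.
rewrite (@expect_SR_frac m t x) // (@expect_SR_frac (k + m) t) //.
  by rewrite intrD mulrDr addrA.
by rewrite x_eq intrD; ring.
Qed.

Lemma expect_SR_opp x g :
  expect (SR delta (- x)) g = expect (SR delta x) (fun w => g (- w)).
Proof.
have [m [t /andP [t_ge0 t_lt1] x_eq]] := int_frac_decomposition x.
rewrite (@expect_SR_frac m t x) ?t_ge0 ?t_lt1 //.
have [t_gt0 | t_le0] := ltrP 0 t; last first.
  have t0 : t = 0 by lra.
  rewrite t0 (@expect_SR_frac (- m) 0 (- x)) ?lexx ?ltr01 //; last first.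
    by rewrite x_eq t0 intrN; ring.
  by rewrite !subr0 !mul0r !addr0 intrN mulrN.
(* the fractional part of [- x / delta] is [1 - t] *)
rewrite (@expect_SR_frac (- m - 1) (1 - t)); first last.
- by rewrite x_eq intrD !intrN; ring.
- by apply/andP; split; lra.
rewrite addrC intrD !intrN mulrDr mulrN1 subrK opprD -mulrN.
by congr (_ * g _ + _ * g _); ring.
Qed.

Variable op : R -> R -> R.
Hypothesis op_add_or_sub : op = +%R \/ op = (fun a b => a - b).

Lemma expect_SR_op v x g : representable v ->
  expect (SR delta (op v x)) g = expect (SR delta x) (fun w => g (op v w)).
Proof.
move=> v_repr; case: op_add_or_sub => ->; first exact: expect_SR_shift.
by rewrite expect_SR_shift // expect_SR_opp.
Qed.

Lemma expect_fbind_SR_op d x g : representable_support d ->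
  expect (fbind d (fun v => SR delta (op v x))) g = expect (fcombine op d (SR delta x)) g.
Proof.
move=> d_repr; rewrite expect_fbind expect_fcombine; apply: eq_big_seq => pv pv_in.
by rewrite expect_SR_op //; exact: d_repr.
Qed.

Lemma expect_foldl_SR_op xs d e :
  representable_support d -> (forall g, expect d g = expect e g) ->
  forall g, expect (foldl (fun d x => fbind d (fun v => SR delta (op v x))) d xs) g
          = expect (foldl (fun d x => fcombine op d (SR delta x)) e xs) g.
Proof.
elim: xs d e => [|x xs IHxs] d e d_repr deq //=.
apply: IHxs => [|g].
  by apply: representable_support_fbind => v; exact: representable_support_SR.
by rewrite expect_fbind_SR_op // !expect_fcombine -deq.
Qed.

End StochasticRounding.

Theorem proposition3p5 (R : realType) (delta : R) (op : R -> R -> R)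
  (x1 : R) (xs : seq R) :
  0 < delta ->
  (op = +%R \/ op = (fun a b => a - b)) ->
  same_law (lhs_law delta op x1 xs) (rhs_law delta op x1 xs).
Proof.
move=> delta_gt0 op_add_or_sub; apply: same_law_expect.
apply: expect_foldl_SR_op => //; exact: representable_support_SR.
Qed.
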